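(* Let $G$ be a graph obtained as follows: start with a connected bipartite graph with bipartition $X\sqcup Y$, $X=\{x_1,\dots,x_n\}$, $Y=\{y_1,\dots,y_m\}$, $n,m\ge 1$; attach $f_i\ge 1$ leaves (new vertices adjacent only to $x_i$) to each $x_i$; and attach $t_j\ge 0$ pendant triangles to each $y_j$ (two new vertices $u,v$ with edges $\{y_j,u\},\{y_j,v\},\{u,v\}$). Let $F=\sum_{i=1}^n f_i$ and $m_0=|\{j\in[m]: t_j=0\}|$. Then $G$ is pseudo-Gorenstein$^{*}$ if and only if $n+F+m_0$ is even.
   Context: For a finite simple graph $G$ on vertex set $[N]$, let $S=K[x_1,\dots,x_N]$ ($K$ a field) and $I(G)$ the edge ideal generated by $x_ix_j$, $\{i,j\}\in E(G)$. Let $\alpha(G)$ be the independence number (equal to $\dim S/I(G)$). Write the Hilbert series of $S/I(G)$ uniquely as $(h_0+\dots+h_st^s)/(1-t)^{\alpha(G)}$ with $h_s\ne 0$, and $\mathfrak a(G)=s-\alpha(G)$. $G$ is pseudo-Gorenstein$^{*}$ if $h_s=1$ and $\mathfrak a(G)=0$. *)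

From HB Require Import structures.
From mathcomp Require Import all_boot all_order all_algebra.
Set Implicit Arguments. Unset Strict Implicit. Unset Printing Implicit Defensive.
Import GRing.Theory Num.Theory.

(* Simple graphs are given by a symmetric irreflexive relation e on a finType V;
   the polynomial ring S = K[x_v | v in V]. *)

Section Graphs.
Variables (V : finType) (e : rel V).

Definition independent (A : {set V}) : bool :=
  [forall u, forall v, (u \in A) && (v \in A) ==> ~~ e u v].

Definition alpha : nat := \max_(A : {set V} | independent A) #|A|.

(* Hilbert function of S/I(G): since I(G) is a monomial ideal, the monomials
   not in I(G) form a K-basis of S/I(G); a monomial x^a lies outside I(G) iff
   its support is independent.  dim_K (S/I(G))_d is thus the number of
   exponent vectors a : V -> N with |a| = d and independent support
   (exponents are < d+1 automatically). *)
Definition hilb (d : nat) : nat :=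
  #|[set a : {ffun V -> 'I_d.+1} |
      (\sum_(v : V) (a v : nat) == d) && independent [set v | (a v : nat) != 0]]|.

(* Coefficients of the numerator h(t) = HS(t) * (1-t)^alpha(G) of the Hilbert
   series of S/I(G) (coefficientwise Cauchy product of power series). *)
Definition hcoef (k : nat) : int :=
  (\sum_(j < k.+1) (-1) ^+ j * ('C(alpha, j))%:Z * (hilb (k - j))%:Z)%R.

(* pseudo-Gorenstein*: with h(t) = h_0 + ... + h_s t^s, h_s <> 0, we need
   h_s = 1 and s - alpha = 0, i.e. h_alpha = 1 and h_k = 0 for all k > alpha. *)
Definition pseudo_gorenstein_star : Prop :=
  hcoef alpha = 1%R /\ (forall k, (alpha < k)%N -> hcoef k = 0%R).

End Graphs.

(* Vertices: x_i (i < n), y_j (j < m), leaves (i, l) with l < f i attached to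
   x_i, and triangle vertices ((j, k), c) with k < t j, c : bool (the two new
   vertices u, v of the k-th pendant triangle at y_j). *)
Definition vert (n m : nat) (f : 'I_n -> nat) (t : 'I_m -> nat) : finType :=
  ((('I_n + 'I_m) + {i : 'I_n & 'I_(f i)}) + ({j : 'I_m & 'I_(t j)} * bool))%type.

Definition adj0 n m f t (b : 'I_n -> 'I_m -> bool) (u v : vert f t) : bool :=
  match u, v with
  | inl (inl (inl x)), inl (inl (inr y)) => b x y
  | inl (inl (inl x)), inl (inr l) => tag l == x
  | inl (inl (inr y)), inr (p, _) => tag p == y
  | inr (p, c), inr (q, c') => (p == q) && (c != c')
  | _, _ => false
  end.

Definition gedge n m f t (b : 'I_n -> 'I_m -> bool) : rel (vert f t) :=
  fun u v => adj0 b u v || adj0 b v u.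

Definition bip_rel n m (b : 'I_n -> 'I_m -> bool) : rel ('I_n + 'I_m)%type :=
  fun u v => match u, v with
  | inl x, inr y => b x y
  | inr y, inl x => b x y
  | _, _ => false
  end.

Definition bip_connected n m (b : 'I_n -> 'I_m -> bool) : Prop :=
  forall u v : ('I_n + 'I_m)%type, connect (bip_rel b) u v.

From mathcomp Require Import all_boot all_order all_algebra.
From mathcomp Require Import zify ring.
Set Implicit Arguments. Unset Strict Implicit. Unset Printing Implicit Defensive.
Import GRing.Theory Num.Theory.

(* Since I(G) is the Stanley-Reisner ideal of the independence complex of G, deleting
   a vertex v from an induced subgraph G[U] gives H_U = H_(U-v) + t H_(U-N(v)) for the
   Hilbert series, which solves to h(t) = sum_(A independent) t^|A| (1-t)^(alpha-|A|).
   Hence deg h <= alpha and h_alpha = (-1)^alpha sum_A (-1)^|A|.  For the graph of the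
   statement, alpha = F + T + m_0 (T the number of triangles): take all leaves, the y_j
   without triangles and one vertex per triangle.  Toggling the first leaf of some x_i
   missing from A, and then, when all x_i (hence no y_j) are in A, toggling the second
   vertex of a triangle whose first vertex is missing, are sign-reversing involutions;
   the only survivor is X plus the first vertices of the triangles, so
   sum_A (-1)^|A| = (-1)^(n+T) and h_alpha = (-1)^(n+F+m_0). *)

Section TruncatedSeries.
Local Open Scope ring_scope.
Variable R : nzRingType.
Implicit Types p q s : {poly R}.

Lemma take_polyMl k s p q :
  take_poly k p = take_poly k q -> take_poly k (s * p) = take_poly k (s * q).
Proof.
move=> epq; apply/polyP => i; rewrite !coef_take_poly; case: ifP => // lt_ik.
rewrite !coefM; apply: eq_bigr => j _; congr (_ * _).
have := congr1 (fun u : {poly R} => u`_(i - j)) epq.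
by rewrite /= !coef_take_poly (leq_ltn_trans (leq_subr j i) lt_ik).
Qed.

Lemma take_poly_fix k p q s :
  take_poly k p = take_poly k (s + 'X * p) -> q = s + 'X * q -> take_poly k p = take_poly k q.
Proof.
(* both [p] and [q] agree with [s / (1 - 'X)] below degree [k] *)
move=> ep eq; suff epq i : (i < k)%N -> p`_i = q`_i.
  by apply/polyP => i; rewrite !coef_take_poly; case: ifP => // /epq.
elim: i => [|i IHi] lt_ik; [have := congr1 (fun u : {poly R} => u`_0) ep |
                             have := congr1 (fun u : {poly R} => u`_i.+1) ep].
all: rewrite /= !coef_take_poly lt_ik => ->; rewrite eq !coefD !coefXM //=.
by rewrite IHi // ltnW.
Qed.
End TruncatedSeries.

Lemma coef_1subX_exp (R : comNzRingType) (r j : nat) :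
  (((1 - 'X) ^+ r : {poly R})`_j = (-1) ^+ j * ('C(r, j))%:R)%R.
Proof.
elim: r j => [|r IHr] j.
  by rewrite expr0 coef1; case: j => [|j]; rewrite ?bin0 ?mulr1 // bin0n mulr0.
rewrite exprS mulrBl mul1r coefB coefXM IHr.
case: j => [|j] /=; first by rewrite !bin0 subr0.
rewrite IHr binS natrD exprS; ring.
Qed.

Lemma coef_Xn_1subX_top (R : comNzRingType) (s r : nat) : (s <= r)%N ->
  (('X^s * (1 - 'X) ^+ (r - s) : {poly R})`_r = (-1) ^+ (r - s))%R.
Proof. by move=> le_sr; rewrite coefXnM ltnNge le_sr coef_1subX_exp binn mulr1. Qed.

Lemma coef_Xn_1subX_gt (R : comNzRingType) (s r k : nat) : (s <= r)%N -> (r < k)%N ->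
  (('X^s * (1 - 'X) ^+ (r - s) : {poly R})`_k = 0)%R.
Proof.
move=> le_sr lt_rk; rewrite coefXnM; case: ifP => // _.
by rewrite coef_1subX_exp bin_small ?mulr0 //; lia.
Qed.

Lemma sum_sign_involution (I : finType) (P : pred I) (phi : I -> I) (c : I -> nat) :
    (forall x, P x -> P (phi x)) -> (forall x, P x -> phi (phi x) = x) ->
    (forall x, P x -> odd (c (phi x)) = ~~ odd (c x)) ->
  (\sum_(x | P x) (-1) ^+ c x = 0 :> int)%R.
Proof.
move=> Pphi phiK odd_phi.
pose psi x := if P x then phi x else x.
have psiK : involutive psi.
  by move=> x; rewrite /psi; case Px: (P x); rewrite ?Pphi ?phiK ?Px.
have Ppsi x : P (psi x) = P x by rewrite /psi; case: ifP => // Px; rewrite Pphi.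
set s := (X in X = _).
suff : s = (- s)%R by lia.
rewrite {1}/s (reindex_inj (inv_inj psiK)) /= -sumrN.
apply: eq_big => [x|x]; first exact: Ppsi.
rewrite Ppsi /psi => Px; rewrite Px -signr_odd odd_phi // -[in RHS]signr_odd.
by case: (odd (c x)); rewrite ?opprK.
Qed.

Section Toggle.
Variable T : finType.
Implicit Types (A : {set T}) (w : T).

Definition toggle A w : {set T} := if w \in A then A :\ w else w |: A.

Lemma in_toggle A w u : (u \in toggle A w) = (if u == w then w \notin A else u \in A).
Proof. by rewrite /toggle; case: ifP => wA; rewrite !inE; case: eqP => [->|]. Qed.

Lemma toggleK A w : toggle (toggle A w) w = A.
Proof. by apply/setP => u; rewrite !in_toggle; case: eqP => [->|]; rewrite ?eqxx ?negbK. Qed.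

Lemma odd_card_toggle A w : odd #|toggle A w| = ~~ odd #|A|.
Proof.
rewrite /toggle; case: ifP => wA; last by rewrite cardsU1 wA.
by rewrite [in RHS](cardsD1 w A) wA add1n negbK.
Qed.

Lemma pick_notin_toggle (I : finType) (g : I -> T) A w : (forall i, g i != w) ->
  [pick i | g i \notin toggle A w] = [pick i | g i \notin A].
Proof. by move=> gw; apply: eq_pick => i /=; rewrite in_toggle (negbTE (gw i)). Qed.

Lemma forall_in_toggle (I : finType) (g : I -> T) A w : (forall i, g i != w) ->
  [forall i, g i \in toggle A w] = [forall i, g i \in A].
Proof. by move=> gw; apply: eq_forallb => i; rewrite in_toggle (negbTE (gw i)). Qed.

End Toggle.

Lemma pick_notin (T I : finType) (g : I -> T) (A : {set T}) :
  ~~ [forall i, g i \in A] -> exists2 i, [pick i | g i \notin A] = Some i & g i \notin A.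
Proof.
case: pickP => [i gi _|none]; first by exists i.
by case/negP; apply/forallP => i; have /negbFE := none i.
Qed.

Lemma card_set_nat (T : finType) (P : pred T) : #|[set w | P w]| = (\sum_(w : T) P w)%N.
Proof. by rewrite -sum1dep_card big_mkcond; apply: eq_bigr => w _; case: (P w). Qed.

Lemma sum_bool_pair (T : finType) (F : T -> bool -> nat) :
  (\sum_(x : T * bool) F x.1 x.2 = \sum_(p : T) (F p true + F p false))%N.
Proof. by rewrite -pair_bigA /=; apply: eq_bigr => p _; rewrite big_bool. Qed.

Section IndependenceComplex.
Variables (V : finType) (e : rel V).
Hypotheses (e_sym : symmetric e) (e_irr : irreflexive e).
Implicit Types (A B U W Z : {set V}) (v w : V).

Lemma independentP A :
  reflect (forall u w, u \in A -> w \in A -> ~~ e u w) (independent e A).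
Proof.
apply: (iffP forallP) => [indA u w uA wA | indA u].
  by have /forallP/(_ w) := indA u; rewrite uA wA.
by apply/forallP => w; apply/implyP => /andP[uA wA]; apply: indA.
Qed.

Lemma independentS A B : A \subset B -> independent e B -> independent e A.
Proof.
by move=> /subsetP sAB /independentP indB; apply/independentP => u w /sAB + /sAB; apply: indB.
Qed.

Lemma independentU1 v A :
  independent e A -> (forall u, u \in A -> ~~ e v u) -> independent e (v |: A).
Proof.
move=> /independentP indA vA; apply/independentP => u w; rewrite !in_setU1.
case/predU1P => [->|uA]; case/predU1P => [->|wA]; first by rewrite e_irr.
- exact: vA.
- by rewrite e_sym; apply: vA.
- exact: indA.
Qed.

Lemma independent_toggle A w : independent e A ->
  (w \notin A -> forall u, u \in A -> ~~ e w u) -> independent e (toggle A w).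
Proof.
move=> indA wA; rewrite /toggle; case: ifPn => [_|/wA]; last exact: independentU1.
exact: independentS (subsetDl _ _) indA.
Qed.

Definition neighbours v : {set V} := [set w | e v w].

Lemma notin_neighbours v : v \notin neighbours v.
Proof. by rewrite inE e_irr. Qed.

Definition supp (k : nat) (a : {ffun V -> 'I_k}) : {set V} := [set v | (a v : nat) != 0%N].

Definition monomials U (d : nat) : {set {ffun V -> 'I_d.+1}} :=
  [set a : {ffun V -> 'I_d.+1} |
    (\sum_v (a v : nat) == d) && independent e (supp a) && (supp a \subset U)].

Definition hilb_on U (d : nat) : nat := #|monomials U d|.

Lemma hilb_onT d : hilb_on setT d = hilb e d.
Proof. by apply: eq_card => a; rewrite !inE subsetT andbT. Qed.

Lemma supp_ord1 (a : {ffun V -> 'I_1}) : supp a = set0.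
Proof. by apply/setP => v; rewrite !inE; case: (a v) => -[]. Qed.

Lemma hilb_on0 U : hilb_on U 0 = 1%N.
Proof.
rewrite /hilb_on (_ : monomials U 0 = setT) ?cardsT ?card_ffun ?card_ord ?exp1n //.
apply/setP => a; rewrite !inE supp_ord1 sub0set andbT.
rewrite big1 => [|v _]; last by case: (a v) => -[].
by apply/independentP => u w; rewrite inE.
Qed.

Lemma hilb_on_set0 d : hilb_on set0 d.+1 = 0%N.
Proof.
apply/eqP; rewrite cards_eq0; apply/eqP/setP => a; rewrite !inE subset0.
apply/negP => /andP[/andP[/eqP sum_a _] /eqP supp_a].
suff a0 v : (a v : nat) = 0%N by move: sum_a; rewrite big1.
by apply/eqP; move/setP/(_ v): supp_a; rewrite !inE => /negbFE.
Qed.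

Lemma monomialsD1 U v d :
  monomials U d :&: [set a : {ffun V -> 'I_d.+1} | (a v : nat) == 0%N] = monomials (U :\ v) d.
Proof.
apply/setP => a; rewrite !inE subsetD1 [in RHS]inE negbK.
by case: (_ == _); case: (independent _ _); rewrite /= ?andbF ?andbT.
Qed.

Lemma sum_delta (v : V) : (\sum_w ((w == v) : nat))%N = 1%N.
Proof. by rewrite (bigD1 v) //= eqxx big1 // => w /negbTE ->. Qed.

Definition bump_at v d (a : {ffun V -> 'I_d.+1}) : {ffun V -> 'I_d.+2} :=
  [ffun w => inord (a w + (w == v))].
Arguments bump_at v {d} a.

Lemma bump_atE v d (a : {ffun V -> 'I_d.+1}) w : (bump_at v a w : nat) = (a w + (w == v))%N.
Proof. by rewrite ffunE inordK //; have := ltn_ord (a w); case: (w == v) => /=; lia. Qed.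

Lemma bump_at_inj v d : injective (@bump_at v d).
Proof.
move=> a1 a2 eq_a; apply/ffunP => w; apply/val_inj => /=.
by have := bump_atE v a1 w; rewrite eq_a bump_atE => /addIn.
Qed.

Lemma supp_bump_at v d (a : {ffun V -> 'I_d.+1}) : supp (bump_at v a) = v |: supp a.
Proof.
by apply/setP => w; rewrite !inE bump_atE; case: (w =P v); rewrite ?addn1 ?addn0.
Qed.

Lemma bump_at_monomials U v d (a : {ffun V -> 'I_d.+1}) : v \in U ->
  a \in monomials (U :\: neighbours v) d -> bump_at v a \in monomials U d.+1.
Proof.
move=> vU; rewrite !inE supp_bump_at => /andP[/andP[/eqP sum_a ind_a] sub_a].
rewrite (eq_bigr _ (fun w _ => bump_atE v a w)) big_split /= sum_a sum_delta addn1 eqxx /=.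
rewrite subUset sub1set vU (subset_trans sub_a (subsetDl _ _)) !andbT.
apply: independentU1 => // u /(subsetP sub_a).
by rewrite !inE => /andP[].
Qed.

Lemma monomials_unbump U v d (a : {ffun V -> 'I_d.+2}) :
    a \in monomials U d.+1 -> (a v : nat) != 0%N ->
  exists2 a', a' \in monomials (U :\: neighbours v) d & a = bump_at v a'.
Proof.
rewrite inE => /andP[/andP[/eqP sum_a ind_a] sub_a] av0.
have le_delta w : ((w == v) <= a w)%N by case: eqP => [->|]; rewrite ?lt0n.
have sum_a' : (\sum_w (a w - (w == v)) = d)%N.
  apply: (@addIn 1); rewrite -[in LHS](sum_delta v) -big_split /= addn1 -[RHS]sum_a.
  by apply: eq_bigr => w _; rewrite subnK.
pose a' : {ffun V -> 'I_d.+1} := [ffun w => inord (a w - (w == v))].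
have a'E w : (a' w : nat) = (a w - (w == v))%N.
  rewrite ffunE inordK // ltnS -[X in (_ <= X)%N]sum_a'.
  by rewrite (bigD1 w) //= leq_addr.
have sub_supp : supp a' \subset supp a.
  by apply/subsetP => w; rewrite !inE a'E; apply: contra => /eqP ->.
exists a'; last by apply/ffunP => w; apply/val_inj; rewrite /= bump_atE a'E subnK.
rewrite inE (eq_bigr _ (fun w _ => a'E w)) sum_a' eqxx (independentS sub_supp ind_a) /=.
apply/subsetP => w /(subsetP sub_supp) wa; rewrite !inE (subsetP sub_a _ wa) andbT.
by move/independentP: ind_a; apply; rewrite // inE.
Qed.

Lemma monomials_bump U v d : v \in U ->
  bump_at v @: monomials (U :\: neighbours v) d =
  monomials U d.+1 :\: [set a : {ffun V -> 'I_d.+2} | (a v : nat) == 0%N].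
Proof.
move=> vU; apply/setP => a; rewrite in_setD [a \in [set _ | _]]inE.
apply/imsetP/andP => [[a' a'm ->]|[av0 am]].
  by rewrite bump_atE eqxx addn1; split; last exact: bump_at_monomials.
by have [a' ? ->] := monomials_unbump am av0; exists a'.
Qed.

Lemma hilb_on_rec U v d : v \in U ->
  hilb_on U d.+1 = (hilb_on (U :\ v) d.+1 + hilb_on (U :\: neighbours v) d)%N.
Proof.
move=> vU; rewrite /hilb_on.
rewrite -(cardsID [set a : {ffun V -> 'I_d.+2} | (a v : nat) == 0%N] (monomials U d.+1)).
by rewrite monomialsD1 -monomials_bump // card_imset //; apply: bump_at_inj.
Qed.

Definition alpha_on U : nat := \max_(A : {set V} | independent e A && (A \subset U)) #|A|.

Lemma card_le_alpha_on U A : independent e A -> A \subset U -> (#|A| <= alpha_on U)%N.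
Proof. by move=> indA sAU; apply: (bigmax_sup A); rewrite ?indA ?sAU. Qed.

Lemma alpha_onS U W : W \subset U -> (alpha_on W <= alpha_on U)%N.
Proof.
move=> sWU; apply/bigmax_leqP => A /andP[indA sAW].
exact: card_le_alpha_on indA (subset_trans sAW sWU).
Qed.

Lemma alpha_onT : alpha_on setT = alpha e.
Proof. by apply: eq_bigl => A; rewrite subsetT andbT. Qed.

Local Open Scope ring_scope.

(** For [alpha_on U <= r], the numerator of the Hilbert series of [S/I(G[U])]
    written over [(1 - t) ^ r]. *)
Definition h_poly U (r : nat) : {poly int} :=
  \sum_(A : {set V} | independent e A && (A \subset U)) 'X^#|A| * (1 - 'X) ^+ (r - #|A|).

Lemma h_poly_set0 r : h_poly set0 r = (1 - 'X) ^+ r.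
Proof.
rewrite /h_poly (eq_bigl (pred1 set0)) ?big_pred1_eq ?cards0 ?subn0 ?mul1r // => A.
rewrite subset0 andbC /=; case: eqP => [->|] //=.
by apply/independentP => u w; rewrite inE.
Qed.

Lemma big_independent_mem Z v (F : {set V} -> {poly int}) : v \in Z ->
  \sum_(A | independent e A && (A \subset Z) && (v \in A)) F A =
  \sum_(B | independent e B && (B \subset (Z :\: neighbours v) :\ v)) F (v |: B).
Proof.
move=> vZ; rewrite (reindex_onto (fun B => v |: B) (fun A => A :\ v)); last first.
  by move=> A /andP[_ vA]; rewrite setD1K.
apply: eq_bigl => B; rewrite setU11 andbT.
have [vB|vB] := boolP (v \in B).
  rewrite subsetD1 vB !andbF; apply/negbTE/negP => /andP[_ /eqP eqB].
  by move: vB; rewrite -eqB setD11.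
rewrite setU1K // eqxx andbT subsetD1 vB andbT subsetD subUset sub1set vZ /=.
apply/idP/idP => [/andP[indB sBZ]|/and3P[indB sBZ disjB]].
  rewrite (independentS (subsetU1 v B) indB) sBZ -setI_eq0 /=; apply/eqP/setP => w.
  rewrite !inE; apply/negbTE/andP => -[wB evw].
  by move/independentP: indB => /(_ v w); rewrite setU11 inE wB orbT evw => /(_ isT isT).
rewrite sBZ andbT; apply: independentU1 => // u uB; apply/negP => evu.
by move: disjB; rewrite -setI_eq0 => /eqP/setP/(_ u); rewrite !inE uB evu.
Qed.

Lemma h_poly_rec U v r : v \in U -> (alpha_on U <= r)%N ->
  h_poly U r = h_poly (U :\ v) r + 'X * h_poly (U :\: neighbours v) r.
Proof.
move=> vU le_alpha_r; set W := U :\: neighbours v.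
have vW : v \in W by rewrite in_setD notin_neighbours.
have WW : W :\: neighbours v = W by apply/setP => w; rewrite !inE; case: (e v w).
rewrite /h_poly (bigID (fun A => v \in A)) /= addrC; congr (_ + _).
  by apply: eq_bigl => A; rewrite subsetD1 andbA.
rewrite (bigID (fun A => v \in A) (fun A => independent e A && (A \subset W))) /=.
rewrite (big_independent_mem _ vU) (big_independent_mem _ vW) WW.
rewrite (eq_bigl (fun B => independent e B && (B \subset W :\ v))); last first.
  by move=> A; rewrite subsetD1 andbA.
rewrite -big_split mulr_sumr /=; apply: eq_bigr => B /andP[indB sBW].
have vB : v \notin B by apply/negP => /(subsetP sBW); rewrite !inE eqxx.
have ltBr : (#|B| < r)%N.
  apply: leq_trans le_alpha_r; have -> : #|B|.+1 = #|v |: B| by rewrite cardsU1 vB.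
  have sBU : B \subset U by apply: subset_trans sBW (subset_trans (subD1set _ _) (subsetDl _ _)).
  apply: card_le_alpha_on; last by rewrite subUset sub1set vU.
  apply: independentU1 => // u /(subsetP sBW).
  by rewrite !inE => /andP[_ /andP[]].
rewrite cardsU1 (negbTE vB) add1n -(subnSK ltBr) !exprS; ring.
Qed.

Definition hilb_poly U (k : nat) : {poly int} := \poly_(i < k) (hilb_on U i)%:Z.

Lemma hilb_poly_rec U v k : v \in U ->
  take_poly k (hilb_poly U k) =
  take_poly k (hilb_poly (U :\ v) k + 'X * hilb_poly (U :\: neighbours v) k).
Proof.
move=> vU; apply/polyP => -[|i]; rewrite !coef_take_poly coefD coefXM !coef_poly /=.
  by case: ltnP; rewrite ?hilb_on0 ?addr0.
by case: ltnP => // lt_ik; rewrite (ltnW lt_ik) (hilb_on_rec _ vU) PoszD.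
Qed.

Lemma hilb_poly_set0 k : take_poly k (hilb_poly set0 k) = take_poly k 1.
Proof.
apply/polyP => i; rewrite !coef_take_poly coef_poly coef1.
by case: ltnP => //; case: i => [|i] _; rewrite ?hilb_on0 ?hilb_on_set0.
Qed.

Lemma hilb_series_numerator r k U : (alpha_on U <= r)%N ->
  take_poly k ((1 - 'X) ^+ r * hilb_poly U k) = take_poly k (h_poly U r).
Proof.
have [N] := ubnP #|U|; elim: N U => // N IHN U ltUN le_alpha_r.
have [->|/set0Pn [v vU]] := eqVneq U set0.
  by rewrite h_poly_set0 -[in RHS](mulr1 ((1 - 'X) ^+ r)); apply/take_polyMl/hilb_poly_set0.
set W := U :\: neighbours v.
have le_alpha_D Y : (alpha_on (U :\: Y) <= r)%N := leq_trans (alpha_onS (subsetDl _ _)) le_alpha_r.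
have IHv : take_poly k ((1 - 'X) ^+ r * hilb_poly (U :\ v) k) = take_poly k (h_poly (U :\ v) r).
  by apply: IHN (le_alpha_D _); move: ltUN; rewrite (cardsD1 v U) vU.
have E : take_poly k ((1 - 'X) ^+ r * hilb_poly U k) =
         take_poly k (h_poly (U :\ v) r + 'X * ((1 - 'X) ^+ r * hilb_poly W k)).
  by rewrite (take_polyMl _ (hilb_poly_rec k vU)) mulrDr mulrCA !take_polyD IHv.
have [WU|neWU] := eqVneq W U.
  by rewrite WU in E; apply: take_poly_fix E _; rewrite {1}(h_poly_rec vU le_alpha_r) -/W WU.
rewrite (h_poly_rec vU le_alpha_r) -/W E !take_polyD (take_polyMl _ (IHN W _ (le_alpha_D _))) //.
by apply: leq_trans (proper_card _) ltUN; rewrite properEneq neWU subsetDl.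
Qed.

Lemma hcoef_h_poly k : hcoef e k = (h_poly setT (alpha e))`_k.
Proof.
have := congr1 (fun p : {poly int} => p`_k) (hilb_series_numerator k.+1 (eq_leq alpha_onT)).
rewrite /= !coef_take_poly ltnSn => <-; rewrite coefM; apply: eq_bigr => j _.
by rewrite coef_1subX_exp coef_poly ltnS leq_subr hilb_onT natz.
Qed.

Lemma hcoef_gt_alpha k : (alpha e < k)%N -> hcoef e k = 0.
Proof.
move=> lt_alpha_k; rewrite hcoef_h_poly coef_sum big1 // => A /andP[indA _].
by apply: coef_Xn_1subX_gt lt_alpha_k; rewrite -alpha_onT card_le_alpha_on.
Qed.

Lemma hcoef_alpha :
  hcoef e (alpha e) = (-1) ^+ alpha e * \sum_(A : {set V} | independent e A) (-1) ^+ #|A|.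
Proof.
rewrite hcoef_h_poly coef_sum mulr_sumr.
apply: eq_big => [A|A]; first by rewrite subsetT andbT.
rewrite subsetT andbT => indA.
have le_A_alpha : (#|A| <= alpha e)%N by rewrite -alpha_onT card_le_alpha_on ?subsetT.
rewrite coef_Xn_1subX_top // -{2}(subnK le_A_alpha) exprD -mulrA -exprD addnn.
by rewrite -[X in _ * X]signr_odd odd_double mulr1.
Qed.

End IndependenceComplex.

Section Construction.
Local Open Scope ring_scope.
Variables (n m : nat) (f : 'I_n -> nat) (t : 'I_m -> nat) (b : 'I_n -> 'I_m -> bool).
Hypotheses (n_gt0 : (0 < n)%N) (b_connected : bip_connected b) (f_gt0 : forall i, (0 < f i)%N).

Local Notation V := (vert f t).
Local Notation e := (gedge (f := f) (t := t) b).
Local Notation triangle := {j : 'I_m & 'I_(t j)}.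

Definition vX i : V := inl (inl (inl i)).
Definition vY j : V := inl (inl (inr j)).
Definition vL (l : {i : 'I_n & 'I_(f i)}) : V := inl (inr l).
Definition vT (p : triangle) c : V := inr (p, c).

Lemma gedge_sym : symmetric e.
Proof. by move=> u v; rewrite /gedge orbC. Qed.

Lemma gedge_irr : irreflexive e.
Proof. by case=> [[[x|y]|l]|[p c]]; rewrite /gedge /= ?eqxx ?orbF ?andbF. Qed.

Lemma exists_x_adj_y j : exists i, b i j.
Proof.
have /connectP[p] := b_connected (inl (Ordinal n_gt0)) (inr j).
elim/last_ind: p => [|p y _] /=; first by move=> _ /eqP.
rewrite rcons_path last_rcons => /andP[_ + eq_y]; rewrite -eq_y.
by case: (last _ p) => [i|j'] //= bij; exists i.
Qed.

Lemma leaf_adj l u : e (vL l) u -> u = vX (tag l).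
Proof. by case: u => [[[x|y]|l']|[q c]] //=; rewrite /gedge /= => /eqP ->. Qed.

Lemma triangle_adj p c u : e (vT p c) u -> u = vY (tag p) \/ u = vT p (~~ c).
Proof.
case: u => [[[x|y]|l']|[q c']] //=; rewrite /gedge /=; first by move/eqP => ->; left.
by case/orP => /andP[/eqP -> ne_c]; right; congr vT; case: c c' ne_c => -[].
Qed.

Lemma t_tag_neq0 (p : triangle) : t (tag p) != 0%N.
Proof. by case: p => j l /=; rewrite -lt0n; apply: leq_ltn_trans (ltn_ord l). Qed.

(** [slots] is a maximum independent set: all leaves, the [y_j] without triangles,
    and one vertex of each triangle. *)
Definition is_slot (w : V) : bool :=
  match w with
  | inl (inl (inl _)) => false
  | inl (inl (inr j)) => t j == 0%N
  | inl (inr _) => true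
  | inr (_, c) => c
  end.

Definition slots : {set V} := [set w | is_slot w].

Definition first_leaf i : {i : 'I_n & 'I_(f i)} := existT _ i (Ordinal (f_gt0 i)).

(** [slot_of w] is [w] or a neighbour of [w], hence [slot_of] is injective on
    independent sets. *)
Definition slot_of (w : V) : V :=
  match w with
  | inl (inl (inl i)) => vL (first_leaf i)
  | inl (inl (inr j)) => if [pick p : triangle | tag p == j] is Some p then vT p true else vY j
  | inl (inr l) => vL l
  | inr (p, _) => vT p true
  end.

Lemma is_slot_slot_of w : is_slot (slot_of w).
Proof.
case: w => [[[x|y]|l]|[p c]] //=.
case: pickP => [p hp|none] //=; apply: contraT; rewrite -lt0n => t_gt0.
by have := none (existT (fun j => 'I_(t j)) y (Ordinal t_gt0)); rewrite /= eqxx.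
Qed.

Lemma slot_of_eq u w : slot_of u = slot_of w -> u = w \/ e u w.
Proof.
case: u => [[[x|y]|l]|[p c]]; case: w => [[[x'|y']|l']|[p' c']] /=;
  try (case: pickP => [q hq|nq]); try (case: pickP => [q' hq'|nq']); try discriminate.
all: try (by move=> _; left).
- by move=> [=] ->; left.
- by move=> [=] <-; right; rewrite /gedge /= eqxx.
- by move=> [=] eq_q; left; rewrite -(eqP hq) -(eqP hq') eq_q.
- by move=> [=] ->; left.
- by move=> [=] <-; right; rewrite /gedge /= hq.
- by move=> [=] ->; right; rewrite /gedge /=.
- by move=> [=] ->; left.
- by move=> [=] ->; right; rewrite /gedge /= ?hq ?orbT.
- by move=> [=] <-; case: c c' => -[]; by [left | right; rewrite /gedge /= eqxx].
Qed.

Lemma independent_slots : independent e slots.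
Proof.
apply/independentP => u w; rewrite !inE.
case: u => [[[x|y]|l]|[p c]]; case: w => [[[x'|y']|l']|[p' c']]; rewrite /gedge /= //.
- move=> /eqP ty _; rewrite orbF; apply/negP => /eqP tp.
  by have := t_tag_neq0 p'; rewrite tp ty.
- move=> _ /eqP ty; apply/negP => /eqP tp.
  by have := t_tag_neq0 p; rewrite tp ty.
- by case: c; case: c' => //=; rewrite !andbF.
Qed.

Lemma alpha_construction : alpha e = #|slots|.
Proof.
apply/eqP; rewrite eqn_leq; apply/andP; split; last exact: bigmax_sup independent_slots _.
apply/bigmax_leqP => A indA.
have inj : {in A &, injective slot_of}.
  move=> u w uA wA /slot_of_eq [] // euw.
  by move/independentP: indA => /(_ u w uA wA); rewrite euw.
rewrite -(card_in_imset inj); apply: subset_leq_card; apply/subsetP => _ /imsetP[w _ ->].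
by rewrite inE is_slot_slot_of.
Qed.

Definition has_all_x (A : {set V}) : bool := [forall i, vX i \in A].
Definition has_all_tri (A : {set V}) : bool := [forall p, vT p true \in A].

Definition toggle_leaf (A : {set V}) : {set V} :=
  if [pick i | vX i \notin A] is Some i then toggle A (vL (first_leaf i)) else A.
Definition toggle_tri (A : {set V}) : {set V} :=
  if [pick p | vT p true \notin A] is Some p then toggle A (vT p false) else A.

(** The first leaf of a missing [x_i] is free to be toggled. *)
Lemma sum_sign_missing_x :
  \sum_(A | independent e A && ~~ has_all_x A) (-1) ^+ #|A| = 0 :> int.
Proof.
have vXL i0 i : vX i != vL (first_leaf i0) by [].
apply: (sum_sign_involution (phi := toggle_leaf)) => A /andP[indA not_all];
  have [i pick_i xiA] := pick_notin not_all; rewrite /toggle_leaf pick_i ?odd_card_toggle //.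
  rewrite /has_all_x forall_in_toggle // -/(has_all_x A) not_all andbT.
  apply: (independent_toggle gedge_sym gedge_irr indA) => _ u uA.
  by apply/negP => /leaf_adj eu; move: uA; rewrite eu /= (negbTE xiA).
by rewrite pick_notin_toggle // pick_i toggleK.
Qed.

Lemma notin_y_of_has_all_x A j : independent e A -> has_all_x A -> vY j \notin A.
Proof.
move=> indA all_x; have [i bij] := exists_x_adj_y j; apply/negP => yA.
have xA : vX i \in A by move/forallP: all_x.
by move/independentP: indA => /(_ _ _ yA xA); rewrite /gedge /= bij.
Qed.

(** Once every [x_i], hence no [y_j], is in [A], the [false] vertex of a triangle
    whose [true] vertex is missing is free to be toggled. *)
Lemma sum_sign_missing_tri :
  \sum_(A | independent e A && has_all_x A && ~~ has_all_tri A) (-1) ^+ #|A| = 0 :> int.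
Proof.
have vTT p0 p : vT p true != vT p0 false by apply/negP => /eqP [].
have vXT p0 i : vX i != vT p0 false by [].
apply: (sum_sign_involution (phi := toggle_tri)) => A /andP[/andP[indA all_x] not_all];
  have [p pick_p pA] := pick_notin not_all; rewrite /toggle_tri pick_p ?odd_card_toggle //.
  rewrite /has_all_x /has_all_tri !forall_in_toggle // -/(has_all_x A) -/(has_all_tri A).
  rewrite all_x not_all !andbT.
  apply: (independent_toggle gedge_sym gedge_irr indA) => _ u uA.
  apply/negP => /triangle_adj [] eu; move: uA; rewrite eu.
    by rewrite (negbTE (notin_y_of_has_all_x _ indA all_x)).
  by rewrite /= (negbTE pA).
by rewrite pick_notin_toggle // pick_p toggleK.
Qed.

Definition in_x_tri (w : V) : bool :=
  match w with inl (inl (inl _)) => true | inr (_, c) => c | _ => false end.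
Definition x_tri : {set V} := [set w | in_x_tri w].

Lemma independent_has_allE A : (independent e A && has_all_x A && has_all_tri A) = (A == x_tri).
Proof.
apply/idP/eqP => [/andP[/andP[indA all_x] all_tri]|->].
  apply/setP => w; rewrite inE; case: w => [[[x|y]|l]|[p c]] /=.
  - exact: (forallP all_x x).
  - exact/negbTE/notin_y_of_has_all_x.
  - apply/negbTE/negP => lA.
    by move/independentP: indA => /(_ _ _ (forallP all_x (tag l)) lA); rewrite /gedge /= eqxx.
  - case: c; first exact: (forallP all_tri p).
    apply/negbTE/negP => pA.
    by move/independentP: indA => /(_ _ _ (forallP all_tri p) pA); rewrite /gedge /= eqxx.
rewrite -andbA; apply/and3P; split; last 2 first.
- by apply/forallP => i; rewrite inE.
- by apply/forallP => p; rewrite inE.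
apply/independentP => u w; rewrite !inE.
case: u => [[[x|y]|l]|[p c]]; case: w => [[[x'|y']|l']|[p' c']]; rewrite /gedge //=.
by move=> -> ->; rewrite !andbF.
Qed.

Lemma card_x_tri : #|x_tri| = (n + #|{: triangle}|)%N.
Proof.
rewrite card_set_nat !big_sumType /= !sum_nat_const card_ord !muln0 muln1 !addn0.
rewrite (eq_bigr (fun x : triangle * bool => (x.2 : nat))); last by case.
by rewrite (sum_bool_pair (fun _ c => (c : nat))) /= sum_nat_const muln1.
Qed.

Lemma card_slots :
  #|slots| = (\sum_(i < n) f i + #|{: triangle}| + #|[set j : 'I_m | t j == 0%N]|)%N.
Proof.
rewrite card_set_nat !big_sumType /= !sum_nat_const !muln0 muln1 add0n.
rewrite (eq_bigr (fun x : triangle * bool => (x.2 : nat))); last by case.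
rewrite (sum_bool_pair (fun _ c => (c : nat))) /= sum_nat_const muln1 (tagnat.card (p_ := f)).
by rewrite card_set_nat -addnA addnC.
Qed.

Lemma sum_sign_independent :
  \sum_(A | independent e A) (-1) ^+ #|A| = (-1) ^+ (n + #|{: triangle}|) :> int.
Proof.
rewrite (bigID has_all_x) /= sum_sign_missing_x addr0.
rewrite (bigID has_all_tri) /= sum_sign_missing_tri addr0.
by rewrite (eq_bigl (pred1 x_tri)) ?big_pred1_eq ?card_x_tri // => A; rewrite independent_has_allE.
Qed.

Lemma hcoef_alpha_construction :
  hcoef e (alpha e) = (-1) ^+ (n + \sum_(i < n) f i + #|[set j : 'I_m | t j == 0%N]|).
Proof.
rewrite (hcoef_alpha gedge_sym gedge_irr) sum_sign_independent alpha_construction card_slots.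
rewrite -exprD; set F := (\sum_(i < n) f i)%N; set m0 := #|[set j : 'I_m | t j == 0%N]|.
have -> : (F + #|{: triangle}| + m0 + (n + #|{: triangle}|) = n + F + m0 + #|{: triangle}|.*2)%N.
  by rewrite -addnn; lia.
by rewrite exprD -[X in _ * X]signr_odd odd_double mulr1.
Qed.

End Construction.

Theorem corollary4p4 (n m : nat) (f : 'I_n -> nat) (t : 'I_m -> nat)
    (b : 'I_n -> 'I_m -> bool) :
  (0 < n)%N -> (0 < m)%N -> bip_connected b -> (forall i, 0 < f i)%N ->
  pseudo_gorenstein_star (gedge (f := f) (t := t) b) <->
  ~~ odd (n + \sum_(i < n) f i + #|[set j : 'I_m | t j == 0%N]|).
Proof.
move=> n_gt0 _ b_conn f_gt0; rewrite /pseudo_gorenstein_star hcoef_alpha_construction //.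
rewrite -signr_odd; case: odd; split=> [[]|_] //; split=> //.
exact: hcoef_gt_alpha (gedge_sym b) (gedge_irr b).
Qed.
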